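(* Let $\lambda>0$, let $(\mathbf{l}_n)_{n\in\mathbb{N}^+}$ be a sequence with $\mathbf{l}_n\in[-1,1]$, and let $(a_n)_{n\in\mathbb{N}^+}$ be a sequence of positive integers with $a_{n+1}>a_n$. Suppose that $\sum_{n=1}^{\infty}e^{-\mathbf{l}_n a_n t}$ is majorized by $t^{-\lambda}$ as $t\to0^+$ (i.e. there is $C>0$ with $\sum_{n=1}^{\infty}e^{-\mathbf{l}_n a_n t}\le C t^{-\lambda}$ for all sufficiently small $t>0$). Then the Euler product $$\prod_{n=1}^{\infty}\frac{1}{1-\mathbf{l}_n a_n^{-s}}$$ admits an analytic continuation to the half-plane $\Re(s)>\max(1/2,\lambda)$ having no zeros and no singularities there.
   Context: For $a>0$, $a^{-s}=e^{-s\ln a}$. *)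

From Stdlib Require Import Reals List.
From Coquelicot Require Import Coquelicot.
Open Scope R_scope.

Definition cexp (z : C) : C :=
  (exp (Re z) * cos (Im z), exp (Re z) * sin (Im z)).

Definition cpow_neg (a : R) (s : C) : C := cexp (- s * RtoC (ln a)).

Fixpoint cprod (f : nat -> C) (N : nat) : C :=
  match N with
  | O => 1%C
  | S N' => (cprod f N' * f N')%C
  end.

Definition euler_factor (l : R) (a : nat) (s : C) : C :=
  (/ (1 - RtoC l * cpow_neg (INR a) s))%C.

Definition holomorphic_on (U : C -> Prop) (F : C -> C) : Prop :=
  forall z, U z -> ex_derive (K := C_AbsRing) (V := C_NormedModule) F z.

(* Testing the majorant at t = 1 / a_n gives n + 1 <= e C a_n^lambda, so a_n grows at least
   like n^(1/lambda) and sum_n (1 + ln a_n)^2 a_n^(-sigma) converges for every sigma > lambda.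
   Near s0 with Re s0 > lambda write the n-th factor as 1 / (1 - w_n(s)), w_n(s) = l_n a_n^(-s).
   As |1 - w_n| stays bounded below on a disc, the factor's distance to 1, its Lipschitz constant
   and its second-order Taylor remainder are bounded by a_n^(-sigma), (ln a_n) a_n^(-sigma) and
   (ln a_n)^2 a_n^(-sigma) up to constants, for some lambda < sigma < Re s0.  Summable bounds of
   this shape make the partial products converge to a nonzero limit, and their product-rule
   derivatives converge too, which gives complex differentiability. *)

From Stdlib Require Import Reals Lra Lia ClassicalEpsilon.
From Coquelicot Require Import Coquelicot.
Open Scope R_scope.

(* [psum b N] sums the first N terms, whereas Coquelicot's [sum_n b N] sums N + 1. *)
Fixpoint psum (b : nat -> R) (N : nat) : R :=
  match N with O => 0 | S N' => psum b N' + b N' end.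

Definition summable (b : nat -> R) : Prop :=
  (forall n, 0 <= b n) /\ exists M, forall N, psum b N <= M.

Lemma psum_ge0 b : (forall n, 0 <= b n) -> forall N, 0 <= psum b N.
Proof. intros Hb N; induction N; simpl; [lra | specialize (Hb N); lra]. Qed.

Lemma psum_le_psum b m n : (forall k, 0 <= b k) -> (m <= n)%nat -> psum b m <= psum b n.
Proof. intros Hb Hmn; induction Hmn; [lra | simpl; specialize (Hb m0); lra]. Qed.

Lemma sum_n_psum (b : nat -> R) N : sum_n b N = psum b (S N).
Proof.
  induction N; [rewrite sum_O; simpl; lra |].
  rewrite sum_Sn, IHN. simpl. unfold plus; simpl. lra.
Qed.

Lemma summable_ex_series b : summable b -> ex_series b.
Proof.
  intros [Hb [M HM]].
  assert (H : ex_finite_lim_seq (sum_n b)).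
  { apply ex_finite_lim_seq_incr with M.
    - intros n. rewrite !sum_n_psum. simpl. specialize (Hb (S n)). lra.
    - intros n. rewrite sum_n_psum. apply HM. }
  destruct H as [s Hs]. exists s. exact Hs.
Qed.

Lemma summable_scal K b : 0 <= K -> summable b -> summable (fun n => K * b n).
Proof.
  intros HK [Hb [M HM]]; split.
  - intros n; specialize (Hb n); nra.
  - exists (K * M). intros N.
    assert (E : psum (fun n => K * b n) N = K * psum b N)
      by (induction N; simpl; [ring | rewrite IHN; ring]).
    rewrite E. specialize (HM N). nra.
Qed.

Lemma summable_plus b c : summable b -> summable c -> summable (fun n => b n + c n).
Proof.
  intros [Hb [M HM]] [Hc [M' HM']]; split.
  - intros n; specialize (Hb n); specialize (Hc n); lra.
  - exists (M + M'). intros N.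
    assert (E : psum (fun n => b n + c n) N = psum b N + psum c N)
      by (induction N; simpl; [ring | rewrite IHN; ring]).
    rewrite E. specialize (HM N); specialize (HM' N); lra.
Qed.

Lemma summable_ext b c : (forall n, b n = c n) -> summable b -> summable c.
Proof.
  intros E [Hb [M HM]]. split; [intros n; rewrite <- E; auto |].
  exists M. intros N. replace (psum c N) with (psum b N); auto.
  induction N; simpl; congruence.
Qed.

Lemma summable_le_eventually b u N0 : summable u -> (forall n, 0 <= b n) ->
  (forall n, (N0 <= n)%nat -> b n <= u n) -> summable b.
Proof.
  intros [Hu [M HM]] Hb Hbu; split; auto.
  exists (psum b N0 + M). intros N.
  assert (H : psum b N <= psum b N0 + psum u N).
  { induction N as [|N IH]; simpl.
    - pose proof (psum_ge0 b Hb N0). lra.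
    - destruct (Compare_dec.le_lt_dec N0 N) as [HN|HN].
      + specialize (Hbu N HN). lra.
      + pose proof (psum_le_psum b (S N) N0 Hb HN). simpl in *.
        pose proof (psum_ge0 u Hu N). specialize (Hu N). lra. }
  specialize (HM N); lra.
Qed.

Lemma summable_le_scal b T K : summable T -> 0 <= K ->
  (forall n, 0 <= b n <= K * T n) -> summable b.
Proof.
  intros HT HK Hb. apply summable_le_eventually with (fun n => K * T n) O.
  - apply summable_scal; auto.
  - apply Hb.
  - intros n _; apply Hb.
Qed.

Definition tends (x : nat -> C) (v : C) : Prop :=
  forall eps, 0 < eps -> exists N0, forall N, (N0 <= N)%nat -> Cmod (x N - v)%C < eps.

Lemma tends_filterlim x v : tends x v -> filterlim x eventually (locally v).
Proof.
  intros Ht P [eps HP]. destruct (Ht eps (cond_pos eps)) as [N0 HN].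
  exists N0. intros n Hn. apply HP, C_NormedModule_mixin_compat1, HN; auto.
Qed.

Lemma sqrt2_lt_2 : sqrt 2 < 2.
Proof. rewrite <- (sqrt_square 2) at 2 by lra. apply sqrt_lt_1; lra. Qed.

Lemma tends_of_summable_increments (x : nat -> C) b : summable b ->
  (forall N, Cmod (x (S N) - x N)%C <= b N) -> exists v, tends x v.
Proof.
  intros Hb Hx.
  set (e := fun N => (x (S N) - x N)%C).
  assert (He : ex_series e).
  { apply (ex_series_le (K := C_AbsRing) (V := C_CompleteNormedModule)) with b.
    - intros n. apply Hx.
    - apply summable_ex_series; auto. }
  destruct He as [s Hs].
  assert (Htel : forall N, x (S N) = (x O + sum_n e N)%C).
  { induction N.
    - rewrite sum_O. unfold e. ring.
    - rewrite sum_Sn. change (x (S (S N)) = (x O + (sum_n e N + e (S N)))%C).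
      rewrite Cplus_assoc, <- IHN. unfold e. ring. }
  exists (x O + s)%C. intros eps Heps.
  assert (Heps2 : 0 < eps / 2) by lra.
  destruct (proj1 (filterlim_locally (F := eventually) (sum_n e) s) Hs (mkposreal _ Heps2))
    as [N0 HN0].
  exists (S N0). intros [|N] HN; [lia |].
  specialize (HN0 N ltac:(lia)).
  apply C_NormedModule_mixin_compat2 in HN0. simpl in HN0.
  rewrite Htel.
  replace (x O + sum_n e N - (x O + s))%C with (minus (sum_n e N) s)
    by (unfold minus, plus, opp; simpl; ring).
  pose proof sqrt2_lt_2.
  assert (sqrt 2 * (eps / 2) < eps) by nra.
  apply Rlt_trans with (sqrt 2 * (eps / 2)); [exact HN0 | lra].
Qed.

Lemma tends_Cmod_le x v M : tends x v -> (forall N, Cmod (x N) <= M) -> Cmod v <= M.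
Proof.
  intros Ht HM. destruct (Rle_lt_dec (Cmod v) M) as [H|H]; auto.
  destruct (Ht (Cmod v - M) ltac:(lra)) as [N0 HN].
  specialize (HN N0 (le_n _)). specialize (HM N0).
  pose proof (Cmod_triangle (x N0) (v - x N0)%C) as Htri.
  replace (x N0 + (v - x N0))%C with v in Htri by ring.
  rewrite <- Cmod_opp in HN. replace (- (x N0 - v))%C with (v - x N0)%C in HN by ring. lra.
Qed.

Lemma tends_Cmod_ge x v M : tends x v -> (forall N, M <= Cmod (x N)) -> M <= Cmod v.
Proof.
  intros Ht HM. destruct (Rle_lt_dec M (Cmod v)) as [H|H]; auto.
  destruct (Ht (M - Cmod v) ltac:(lra)) as [N0 HN].
  specialize (HN N0 (le_n _)). specialize (HM N0).
  pose proof (Cmod_triangle (x N0 - v) v)%C as Htri.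
  replace (x N0 - v + v)%C with (x N0) in Htri by ring. lra.
Qed.

Lemma tends_sub_scal x y z u v w k : tends x u -> tends y v -> tends z w ->
  tends (fun N => x N - y N - k * z N)%C (u - v - k * w)%C.
Proof.
  intros Hx Hy Hz eps Heps.
  set (e := eps / (3 * (1 + Cmod k))).
  assert (Hk := Cmod_ge_0 k).
  assert (He : 0 < e) by (unfold e; apply Rdiv_lt_0_compat; lra).
  assert (Hee : e * (3 * (1 + Cmod k)) = eps) by (unfold e; field; lra).
  destruct (Hx e He) as [N1 H1], (Hy e He) as [N2 H2], (Hz e He) as [N3 H3].
  exists (N1 + N2 + N3)%nat. intros N HN.
  specialize (H1 N ltac:(lia)); specialize (H2 N ltac:(lia)); specialize (H3 N ltac:(lia)).
  replace (x N - y N - k * z N - (u - v - k * w))%C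
    with ((x N - u) + (- (y N - v)) + (- k) * (z N - w))%C by ring.
  pose proof (Cmod_triangle (x N - u + - (y N - v)) (- k * (z N - w)))%C as T1.
  pose proof (Cmod_triangle (x N - u) (- (y N - v)))%C as T2.
  rewrite Cmod_mult, Cmod_opp in T1. rewrite Cmod_opp in T2.
  assert (Cmod k * Cmod (z N - w)%C <= Cmod k * e) by (apply Rmult_le_compat_l; lra).
  nra.
Qed.

Definition limC (x : nat -> C) : C := epsilon (inhabits (RtoC 0)) (tends x).

Lemma tends_limC x : (exists v, tends x v) -> tends x (limC x).
Proof. exact (epsilon_spec (inhabits (RtoC 0)) (tends x)). Qed.

Lemma Cmod_le_1_add (z : C) b : Cmod (z - 1)%C <= b -> Cmod z <= 1 + b.
Proof.
  intros H. pose proof (Cmod_triangle (z - 1)%C 1%C) as Htri.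
  replace (z - 1 + 1)%C with z in Htri by ring. rewrite Cmod_1 in Htri. lra.
Qed.

Lemma exp_le_exp x y : x <= y -> exp x <= exp y.
Proof. intros [H | ->]; [left; apply exp_increasing |]; lra. Qed.

Lemma cprod_Cmod_le_exp g b : (forall n, Cmod (g n - 1)%C <= b n) ->
  forall N, Cmod (cprod g N) <= exp (psum b N).
Proof.
  intros H N. induction N; simpl.
  - rewrite Cmod_1, exp_0. lra.
  - rewrite Cmod_mult, exp_plus. apply Rmult_le_compat; try apply Cmod_ge_0; auto.
    eapply Rle_trans; [apply Cmod_le_1_add, H | apply exp_ineq1_le].
Qed.

Lemma cprod_Cmod_ge_exp g c : (forall n, 0 <= c n) ->
  (forall n, 1 <= Cmod (g n) * (1 + c n)) ->
  forall N, exp (- psum c N) <= Cmod (cprod g N).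
Proof.
  intros Hc H N. induction N; simpl.
  - rewrite Cmod_1, Ropp_0, exp_0. lra.
  - rewrite Cmod_mult, Ropp_plus_distr, exp_plus.
    apply Rmult_le_compat; try (left; apply exp_pos); auto.
    specialize (H N). specialize (Hc N).
    pose proof (exp_ineq1_le (c N)). pose proof (exp_pos (c N)).
    rewrite exp_Ropp. apply Rmult_le_reg_r with (exp (c N)); auto.
    rewrite Rinv_l by lra. pose proof (Cmod_ge_0 (g N)). nra.
Qed.

Lemma cprod_tends g b : summable b -> (forall n, Cmod (g n - 1)%C <= b n) ->
  exists v, tends (cprod g) v.
Proof.
  intros [Hb [M HM]] H.
  apply tends_of_summable_increments with (fun n => exp M * b n).
  - apply summable_scal; [left; apply exp_pos | split; eauto].
  - intros N. simpl.
    replace (cprod g N * g N - cprod g N)%C with (cprod g N * (g N - 1))%C by ring.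
    rewrite Cmod_mult. apply Rmult_le_compat; try apply Cmod_ge_0; auto.
    eapply Rle_trans; [apply cprod_Cmod_le_exp; eauto | apply exp_le_exp, HM].
Qed.

Lemma C_eq_add_sub (a y : C) : y = (a + (y + - a))%C.
Proof. ring. Qed.

Lemma is_derive_of_quadratic_remainder (F : C -> C) s0 D K r : 0 < r -> 0 <= K ->
  (forall h, Cmod h <= r -> Cmod (F (s0 + h) - F s0 - h * D)%C <= K * Cmod h ^ 2) ->
  is_derive (K := C_AbsRing) (V := C_NormedModule) F s0 D.
Proof.
  intros Hr HK H. split; [apply is_linear_scal_l |].
  intros x Hx.
  apply (is_filter_lim_locally_unique (K := C_AbsRing)
           (V := AbsRing_NormedModule C_AbsRing)) in Hx. subst x.
  intros eps.
  set (m := Rmin r (eps / (K + 1))).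
  assert (Hm : 0 < m) by (apply Rmin_pos; [lra | apply Rdiv_lt_0_compat; [apply cond_pos | lra]]).
  exists (mkposreal _ Hm). intros y Hy.
  change (Cmod (minus y s0) < m) in Hy.
  set (h := minus y s0) in *.
  assert (Hy' : y = (s0 + h)%C) by (unfold h; exact (C_eq_add_sub s0 y)).
  change (Cmod (F y - F s0 - h * D)%C <= eps * Cmod h).
  rewrite Hy'.
  pose proof (Cmod_ge_0 h) as Hh0. pose proof (cond_pos eps) as Heps.
  pose proof (Rmin_l r (eps / (K + 1))) as Hmr.
  pose proof (Rmin_r r (eps / (K + 1))) as Hme. fold m in Hmr, Hme.
  eapply Rle_trans; [apply H; lra |].
  assert (HKe : K * Cmod h <= eps).
  { assert (Hq : eps / (K + 1) * (K + 1) = eps) by (field; lra).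
    assert (0 < eps / (K + 1)) by (apply Rdiv_lt_0_compat; lra).
    assert (K * Cmod h <= K * (eps / (K + 1))) by (apply Rmult_le_compat_l; lra).
    nra. }
  replace (K * Cmod h ^ 2) with ((K * Cmod h) * Cmod h) by ring.
  apply Rmult_le_compat_r; nra.
Qed.

Fixpoint cprod_deriv (f : nat -> C -> C) (s0 : C) (d : nat -> C) (N : nat) : C :=
  match N with
  | O => 0%C
  | S N' => (cprod_deriv f s0 d N' * f N' s0 + cprod (fun n => f n s0) N' * d N')%C
  end.

Lemma Cmod_eq_0_of (z : C) : z = 0%C -> Cmod z = 0.
Proof. intros ->. apply Cmod_0. Qed.

Section CprodDerive.
Variables (f : nat -> C -> C) (s0 : C) (r : R) (d : nat -> C) (b be ga : nat -> R).
Hypothesis Hr : 0 < r.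
Hypothesis Hb : summable b.
Hypothesis Hbe : summable be.
Hypothesis Hga : summable ga.
Hypothesis Hf1 : forall n h, Cmod h <= r -> Cmod (f n (s0 + h) - 1)%C <= b n.
Hypothesis Hf_lip : forall n h, Cmod h <= r -> Cmod (f n (s0 + h) - f n s0)%C <= be n * Cmod h.
Hypothesis Hf_taylor : forall n h, Cmod h <= r ->
  Cmod (f n (s0 + h) - f n s0 - h * d n)%C <= ga n * Cmod h ^ 2.
Hypothesis Hd : forall n, Cmod (d n) <= be n.

Local Notation p h := (cprod (fun n => f n (s0 + h)%C)).
Local Notation p0 := (cprod (fun n => f n s0)).
Local Notation D := (cprod_deriv f s0 d).

Lemma factor_center_dev n : Cmod (f n s0 - 1)%C <= b n.
Proof.
  pose proof (Hf1 n 0%C) as H. rewrite Cplus_0_r in H. apply H. rewrite Cmod_0; lra.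
Qed.

Lemma cprod_center_Cmod_le N : Cmod (p0 N) <= exp (psum b N).
Proof. apply cprod_Cmod_le_exp, factor_center_dev. Qed.

Lemma cprod_deriv_Cmod_le N : Cmod (D N) <= exp (psum b N) * psum be N.
Proof.
  induction N as [|N IH]; simpl; [rewrite Cmod_0; lra |].
  pose proof (proj1 Hb N) as HbN. pose proof (proj1 Hbe N) as HbeN.
  pose proof (psum_ge0 be (proj1 Hbe) N) as HS.
  pose proof (cprod_center_Cmod_le N) as Hp0.
  pose proof (Cmod_le_1_add _ _ (factor_center_dev N)) as Hq.
  pose proof (exp_ineq1_le (b N)). pose proof (exp_pos (psum b N)).
  pose proof (Hd N). pose proof (Cmod_ge_0 (D N)). pose proof (Cmod_ge_0 (d N)).
  eapply Rle_trans; [apply Cmod_triangle |]. rewrite !Cmod_mult, exp_plus.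
  assert (Cmod (D N) * Cmod (f N s0) <= exp (psum b N) * psum be N * exp (b N))
    by (apply Rmult_le_compat; try apply Cmod_ge_0; lra).
  assert (Cmod (p0 N) * Cmod (d N) <= exp (psum b N) * be N)
    by (apply Rmult_le_compat; try apply Cmod_ge_0; lra).
  assert (exp (psum b N) * be N <= exp (psum b N) * be N * exp (b N))
    by (assert (0 <= exp (psum b N) * be N) by nra; nra).
  nra.
Qed.

Lemma cprod_taylor_le h : Cmod h <= r -> forall N,
  Cmod (p h N - p0 N - h * D N)%C
    <= exp (psum b N) * (psum ga N + psum be N ^ 2) * Cmod h ^ 2.
Proof.
  intros Hh N. induction N as [|N IH]; simpl.
  - rewrite (Cmod_eq_0_of (1 - 1 - h * 0)%C) by ring.
    pose proof (pow2_ge_0 (Cmod h)). simpl. lra.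
  - set (q := f N s0) in *. set (q' := f N (s0 + h)) in *.
    set (E := exp (psum b N)) in *. set (S := psum be N) in *. set (G := psum ga N) in *.
    set (x := Cmod h).
    replace (p h N * q' - p0 N * q - h * (D N * q + p0 N * d N))%C with
      ((p h N - p0 N - h * D N) * q' + h * D N * (q' - q) + p0 N * (q' - q - h * d N))%C
      by ring.
    eapply Rle_trans; [apply Cmod_triangle |].
    eapply Rle_trans; [apply Rplus_le_compat_r, Cmod_triangle |].
    rewrite !Cmod_mult, exp_plus. fold x E.
    pose proof (proj1 Hb N) as HbN. pose proof (proj1 Hbe N) as HbeN.
    pose proof (proj1 Hga N) as HgaN.
    assert (HS : 0 <= S) by apply (psum_ge0 be (proj1 Hbe)).
    assert (HG : 0 <= G) by apply (psum_ge0 ga (proj1 Hga)).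
    assert (HE : 0 < E) by apply exp_pos.
    assert (Hx : 0 <= x) by apply Cmod_ge_0.
    assert (Heb : 1 + b N <= exp (b N)) by apply exp_ineq1_le.
    assert (Hq' : Cmod q' <= exp (b N)) by (eapply Rle_trans; [apply Cmod_le_1_add, Hf1 | ]; auto).
    pose proof (cprod_center_Cmod_le N) as Hp0. pose proof (cprod_deriv_Cmod_le N) as HD.
    pose proof (Hf_lip N h Hh) as Hlip. pose proof (Hf_taylor N h Hh) as Htay.
    fold q q' x E S in Hlip, Htay, HD, Hp0.
    assert (A1 : Cmod (p h N - p0 N - h * D N)%C * Cmod q' <= E * (G + S ^ 2) * x ^ 2 * exp (b N))
      by (apply Rmult_le_compat; auto; apply Cmod_ge_0).
    assert (A2 : x * Cmod (D N) * Cmod (q' - q)%C <= x * (E * S) * (be N * x))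
      by (apply Rmult_le_compat; try apply Rmult_le_compat_l; auto;
          try apply Rmult_le_pos; auto; apply Cmod_ge_0).
    assert (A3 : Cmod (p0 N) * Cmod (q' - q - h * d N)%C <= E * (ga N * x ^ 2))
      by (apply Rmult_le_compat; auto; apply Cmod_ge_0).
    assert (A4 : 0 <= E * x ^ 2) by nra.
    assert (A5 : E * x ^ 2 * (S * be N + ga N) <= E * x ^ 2 * exp (b N) * (S * be N + ga N))
      by (assert (0 <= E * x ^ 2 * (S * be N + ga N)) by (apply Rmult_le_pos; nra); nra).
    assert (A6 : 0 <= E * exp (b N) * x ^ 2 * (2 * S * be N + be N ^ 2 - S * be N))
      by (pose proof (exp_pos (b N)); apply Rmult_le_pos; nra).
    nra.
Qed.

Lemma cprod_deriv_tends : exists D', tends D D'.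
Proof.
  destruct Hb as [Hb0 [Mb HMb]], Hbe as [Hbe0 [Mbe HMbe]].
  set (E := exp Mb).
  assert (HE : forall N, exp (psum b N) <= E) by (intros; apply exp_le_exp; auto).
  assert (HMbe0 : 0 <= Mbe) by (pose proof (HMbe O); simpl in *; lra).
  apply tends_of_summable_increments with (fun N => E * Mbe * b N + E * be N).
  { apply summable_plus; apply summable_scal; try (split; eauto);
      pose proof (exp_pos Mb); unfold E; nra. }
  intros N. simpl.
  replace (D N * f N s0 + p0 N * d N - D N)%C with (D N * (f N s0 - 1) + p0 N * d N)%C by ring.
  eapply Rle_trans; [apply Cmod_triangle |]. rewrite !Cmod_mult.
  assert (HD : Cmod (D N) <= E * Mbe).
  { eapply Rle_trans; [apply cprod_deriv_Cmod_le |].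
    apply Rmult_le_compat; auto; [left; apply exp_pos | apply psum_ge0; auto]. }
  assert (Hp0 : Cmod (p0 N) <= E) by (eapply Rle_trans; [apply cprod_center_Cmod_le | auto]).
  apply Rplus_le_compat; apply Rmult_le_compat; try apply Cmod_ge_0; auto.
  apply factor_center_dev.
Qed.

Lemma ex_derive_of_cprod_tends (F : C -> C) :
  (forall h, Cmod h <= r -> tends (p h) (F (s0 + h)%C)) ->
  ex_derive (K := C_AbsRing) (V := C_NormedModule) F s0.
Proof.
  intros HF.
  destruct cprod_deriv_tends as [D' HD'].
  destruct Hbe as [Hbe0 [Mbe HMbe]], Hga as [Hga0 [Mga HMga]], Hb as [Hb0 [Mb HMb]].
  assert (HMbe0 : 0 <= Mbe) by (pose proof (HMbe O); simpl in *; lra).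
  assert (HMga0 : 0 <= Mga) by (pose proof (HMga O); simpl in *; lra).
  exists D'. apply (is_derive_of_quadratic_remainder F s0 D' (exp Mb * (Mga + Mbe ^ 2)) r Hr).
  { pose proof (exp_pos Mb). apply Rmult_le_pos; nra. }
  intros h Hh.
  assert (Hp0 := HF 0%C ltac:(rewrite Cmod_0; lra)). rewrite Cplus_0_r in Hp0.
  apply (tends_Cmod_le _ _ _ (tends_sub_scal _ _ _ _ _ _ h (HF h Hh) Hp0 HD')).
  intros N. eapply Rle_trans; [apply cprod_taylor_le; auto |].
  assert (0 <= psum ga N) by (apply psum_ge0; auto).
  assert (0 <= psum be N) by (apply psum_ge0; auto).
  assert (psum be N ^ 2 <= Mbe ^ 2) by (apply pow_incr; auto).
  pose proof (pow2_ge_0 (Cmod h)). pose proof (HMga N).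
  apply Rmult_le_compat_r; auto.
  apply Rmult_le_compat; [left; apply exp_pos | nra | apply exp_le_exp; auto | lra].
Qed.
End CprodDerive.

Lemma cexp_add z1 z2 : cexp (z1 + z2)%C = (cexp z1 * cexp z2)%C.
Proof.
  destruct z1 as [x1 y1], z2 as [x2 y2]. unfold cexp; simpl.
  rewrite exp_plus, cos_plus, sin_plus.
  apply injective_projections; simpl; ring.
Qed.

Lemma cexp_0 : cexp 0%C = 1%C.
Proof.
  unfold cexp; simpl. rewrite exp_0, cos_0, sin_0. apply injective_projections; simpl; ring.
Qed.

Lemma Cmod_cexp z : Cmod (cexp z) = exp (Re z).
Proof.
  destruct z as [x y]. unfold cexp, Cmod; simpl.
  pose proof (sin2_cos2 y) as Hs. unfold Rsqr in Hs.
  replace (exp x * cos y * (exp x * cos y * 1) + exp x * sin y * (exp x * sin y * 1))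
    with (exp x * exp x) by nra.
  apply sqrt_square. left; apply exp_pos.
Qed.

Lemma Rabs_Im_le_Cmod (z : C) : Rabs (Im z) <= Cmod z.
Proof.
  apply Rsqr_incr_0_var; [| apply Cmod_ge_0].
  rewrite <- Rsqr_abs, !Rsqr_pow2, Cmod2_alt. pose proof (pow2_ge_0 (Re z)). lra.
Qed.

Lemma Cmod_le_Rabs_Re_Im (z : C) : Cmod z <= Rabs (Re z) + Rabs (Im z).
Proof.
  pose proof (Rabs_pos (Re z)); pose proof (Rabs_pos (Im z)).
  apply Rsqr_incr_0; [| apply Cmod_ge_0 | lra].
  rewrite !Rsqr_pow2, Cmod2_alt, <- (pow2_abs (Re z)), <- (pow2_abs (Im z)).
  pose proof (Rabs_pos (Re z)); pose proof (Rabs_pos (Im z)). nra.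
Qed.

Lemma Rabs_sub_le_of_derive_le phi phi1 M : (forall t, is_derive phi t (phi1 t)) ->
  (forall t, 0 <= t <= 1 -> Rabs (phi1 t) <= M) -> Rabs (phi 1 - phi 0) <= M.
Proof.
  intros Hd HM.
  destruct (MVT_gen phi 0 1 phi1) as [c [Hc Heq]].
  - intros; apply Hd.
  - intros t _. apply continuity_pt_filterlim, (ex_derive_continuous phi). eexists; apply Hd.
  - rewrite Rmin_left, Rmax_right in Hc by lra.
    rewrite Heq, Rminus_0_r, Rmult_1_r. apply HM; auto.
Qed.

Lemma Rabs_taylor1_le_of_derive2_le phi phi1 phi2 M : (forall t, is_derive phi t (phi1 t)) ->
  (forall t, is_derive phi1 t (phi2 t)) ->
  (forall t, 0 <= t <= 1 -> Rabs (phi2 t) <= M) -> Rabs (phi 1 - phi 0 - phi1 0) <= M.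
Proof.
  intros Hd Hd1 HM.
  replace (phi 1 - phi 0 - phi1 0) with ((phi 1 - 1 * phi1 0) - (phi 0 - 0 * phi1 0)) by ring.
  apply (Rabs_sub_le_of_derive_le (fun t => phi t - t * phi1 0) (fun t => phi1 t - phi1 0)).
  - intros t. apply (is_derive_minus phi (fun t => t * phi1 0)); [apply Hd |].
    auto_derive; auto. ring.
  - intros t Ht.
    replace (phi1 t - phi1 0) with (phi1 t - phi1 0 - 0 * phi2 0) by ring.
    destruct (MVT_gen phi1 0 t phi2) as [c [Hc Heq]].
    + intros; apply Hd1.
    + intros u _. apply continuity_pt_filterlim, (ex_derive_continuous phi1). eexists; apply Hd1.
    + assert (HM0 : 0 <= M) by (pose proof (HM 0 ltac:(lra)); pose proof (Rabs_pos (phi2 0)); lra).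
      rewrite Rmin_left, Rmax_right in Hc by lra.
      rewrite Rmult_0_l, Rminus_0_r, Heq, Rminus_0_r, Rabs_mult, (Rabs_right t) by lra.
      pose proof (HM c ltac:(lra)). pose proof (Rabs_pos (phi2 c)). nra.
Qed.

Lemma Rabs_exp_trig_comb_le x m M al be c1 c2 t : Rabs x <= m -> 0 <= t <= 1 ->
  Rabs al <= M -> Rabs be <= M -> Rabs c1 <= 1 -> Rabs c2 <= 1 ->
  Rabs (al * exp (t * x) * c1 + be * exp (t * x) * c2) <= 2 * M * exp m.
Proof.
  intros Hx Ht Hal Hbe Hc1 Hc2.
  assert (He : exp (t * x) <= exp m).
  { apply exp_le_exp. pose proof (Rle_abs x). pose proof (Rabs_pos x). nra. }
  pose proof (exp_pos (t * x)). pose proof (Rabs_pos al). pose proof (Rabs_pos be).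
  pose proof (Rabs_pos c1). pose proof (Rabs_pos c2).
  eapply Rle_trans; [apply Rabs_triang |].
  rewrite !Rabs_mult, !(Rabs_right (exp (t * x))) by lra.
  assert (Rabs al * exp (t * x) * Rabs c1 <= M * exp m * 1)
    by (apply Rmult_le_compat; try apply Rmult_le_compat; nra).
  assert (Rabs be * exp (t * x) * Rabs c2 <= M * exp m * 1)
    by (apply Rmult_le_compat; try apply Rmult_le_compat; nra).
  lra.
Qed.

Lemma cexp_sub1_bound z : Cmod (cexp z - 1)%C <= 4 * Cmod z * exp (Cmod z).
Proof.
  destruct z as [x y].
  set (m := Cmod (x, y)).
  assert (Hx : Rabs x <= m) by apply (re_le_Cmod (x, y)).
  assert (Hy : Rabs y <= m) by apply (Rabs_Im_le_Cmod (x, y)).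
  assert (Hmy : Rabs (- y) <= m) by (rewrite Rabs_Ropp; auto).
  assert (Hcos : forall t, Rabs (cos t) <= 1) by (intros; apply Rabs_le, COS_bound).
  assert (Hsin : forall t, Rabs (sin t) <= 1) by (intros; apply Rabs_le, SIN_bound).
  assert (HRe : Rabs (Re (cexp (x, y) - 1)%C) <= 2 * m * exp m).
  { change (Rabs (exp x * cos y - 1) <= 2 * m * exp m).
    replace (exp x * cos y - 1) with (exp (1 * x) * cos (1 * y) - exp (0 * x) * cos (0 * y))
      by (rewrite !Rmult_0_l, !Rmult_1_l, exp_0, cos_0; ring).
    apply (Rabs_sub_le_of_derive_le (fun t => exp (t * x) * cos (t * y))
      (fun t => x * exp (t * x) * cos (t * y) + - y * exp (t * x) * sin (t * y))).
    - intros t. auto_derive; auto. ring.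
    - intros t Ht. apply Rabs_exp_trig_comb_le; auto. }
  assert (HIm : Rabs (Im (cexp (x, y) - 1)%C) <= 2 * m * exp m).
  { change (Rabs (exp x * sin y - 0) <= 2 * m * exp m).
    replace (exp x * sin y - 0) with (exp (1 * x) * sin (1 * y) - exp (0 * x) * sin (0 * y))
      by (rewrite !Rmult_0_l, !Rmult_1_l, sin_0; ring).
    apply (Rabs_sub_le_of_derive_le (fun t => exp (t * x) * sin (t * y))
      (fun t => x * exp (t * x) * sin (t * y) + y * exp (t * x) * cos (t * y))).
    - intros t. auto_derive; auto. ring.
    - intros t Ht. apply Rabs_exp_trig_comb_le; auto. }
  eapply Rle_trans; [apply Cmod_le_Rabs_Re_Im | lra].
Qed.

Lemma cexp_taylor2_bound z : Cmod (cexp z - 1 - z)%C <= 8 * Cmod z ^ 2 * exp (Cmod z).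
Proof.
  destruct z as [x y].
  set (m := Cmod (x, y)).
  assert (Hx : Rabs x <= m) by apply (re_le_Cmod (x, y)).
  assert (Hy : Rabs y <= m) by apply (Rabs_Im_le_Cmod (x, y)).
  assert (Hm : 0 <= m) by apply Cmod_ge_0.
  assert (Hx2 : Rabs (x ^ 2 - y ^ 2) <= 2 * m ^ 2).
  { rewrite <- (pow2_abs x), <- (pow2_abs y).
    pose proof (Rabs_pos x); pose proof (Rabs_pos y). apply Rabs_le. split; nra. }
  assert (Hxy : Rabs (2 * x * y) <= 2 * m ^ 2).
  { rewrite !Rabs_mult, Rabs_right by lra. pose proof (Rabs_pos x); pose proof (Rabs_pos y). nra. }
  assert (Hmxy : Rabs (- (2 * x * y)) <= 2 * m ^ 2) by (rewrite Rabs_Ropp; auto).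
  assert (Hcos : forall t, Rabs (cos t) <= 1) by (intros; apply Rabs_le, COS_bound).
  assert (Hsin : forall t, Rabs (sin t) <= 1) by (intros; apply Rabs_le, SIN_bound).
  assert (HRe : Rabs (Re (cexp (x, y) - 1 - (x, y))%C) <= 2 * (2 * m ^ 2) * exp m).
  { change (Rabs (exp x * cos y - 1 - x) <= 2 * (2 * m ^ 2) * exp m).
    replace (exp x * cos y - 1 - x) with (exp (1 * x) * cos (1 * y) - exp (0 * x) * cos (0 * y)
        - (x * exp (0 * x) * cos (0 * y) + - y * exp (0 * x) * sin (0 * y)))
      by (rewrite !Rmult_0_l, !Rmult_1_l, exp_0, cos_0, sin_0; ring).
    apply (Rabs_taylor1_le_of_derive2_le (fun t => exp (t * x) * cos (t * y))
      (fun t => x * exp (t * x) * cos (t * y) + - y * exp (t * x) * sin (t * y))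
      (fun t => (x ^ 2 - y ^ 2) * exp (t * x) * cos (t * y)
                + - (2 * x * y) * exp (t * x) * sin (t * y))).
    - intros t. auto_derive; auto. ring.
    - intros t. auto_derive; auto. ring.
    - intros t Ht. apply Rabs_exp_trig_comb_le; auto. }
  assert (HIm : Rabs (Im (cexp (x, y) - 1 - (x, y))%C) <= 2 * (2 * m ^ 2) * exp m).
  { change (Rabs (exp x * sin y - 0 - y) <= 2 * (2 * m ^ 2) * exp m).
    replace (exp x * sin y - 0 - y) with (exp (1 * x) * sin (1 * y) - exp (0 * x) * sin (0 * y)
        - (x * exp (0 * x) * sin (0 * y) + y * exp (0 * x) * cos (0 * y)))
      by (rewrite !Rmult_0_l, !Rmult_1_l, exp_0, cos_0, sin_0; ring).
    apply (Rabs_taylor1_le_of_derive2_le (fun t => exp (t * x) * sin (t * y))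
      (fun t => x * exp (t * x) * sin (t * y) + y * exp (t * x) * cos (t * y))
      (fun t => (x ^ 2 - y ^ 2) * exp (t * x) * sin (t * y)
                + (2 * x * y) * exp (t * x) * cos (t * y))).
    - intros t. auto_derive; auto. ring.
    - intros t. auto_derive; auto. ring.
    - intros t Ht. apply Rabs_exp_trig_comb_le; auto. }
  eapply Rle_trans; [apply Cmod_le_Rabs_Re_Im | lra].
Qed.

Lemma Rdiv_le_Rdiv x y X Y : 0 <= x <= X -> 0 < Y <= y -> x / y <= X / Y.
Proof.
  intros Hx Hy. unfold Rdiv. apply Rmult_le_compat; try lra.
  - left; apply Rinv_0_lt_compat; lra.
  - apply Rinv_le_contravar; lra.
Qed.

Lemma neq_0_of_Cmod_ge (z : C) m : 0 < m -> m <= Cmod z -> z <> 0%C.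
Proof. intros Hm H E. rewrite E, Cmod_0 in H. lra. Qed.

Section InverseFactor.
Variables (w : C -> C) (s0 : C) (r L A m : R).
Hypothesis Hr : 0 <= r.
Hypothesis HL : 0 <= L.
Hypothesis HA : A <= 1.
Hypothesis Hm : 0 < m.
Hypothesis Hw : forall h, Cmod h <= r -> w (s0 + h)%C = (w s0 * cexp (- h * RtoC L))%C.
Hypothesis Hw0 : Cmod (w s0) * exp (L * r) <= A.
Hypothesis Hmw : forall h, Cmod h <= r -> m <= Cmod (1 - w (s0 + h)%C)%C.

Local Notation f s := (/ (1 - w s))%C.
Local Notation df0 := ((- RtoC L * w s0) / ((1 - w s0) * (1 - w s0)))%C.

Lemma Cmod_scaled_shift h : Cmod (- h * RtoC L)%C = L * Cmod h.
Proof. rewrite Cmod_mult, Cmod_opp, Cmod_R, Rabs_right by lra. ring. Qed.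

Lemma exp_scaled_shift_le h : Cmod h <= r -> exp (L * Cmod h) <= exp (L * r).
Proof. intros Hh. apply exp_le_exp, Rmult_le_compat_l; auto. Qed.

Lemma w_center_cexp_dev_le h : Cmod h <= r ->
  Cmod (w s0) * Cmod (cexp (- h * RtoC L) - 1)%C <= 4 * L * A * Cmod h.
Proof.
  intros Hh. pose proof (Cmod_ge_0 h). pose proof (Cmod_ge_0 (w s0)).
  pose proof (exp_scaled_shift_le h Hh).
  eapply Rle_trans; [apply Rmult_le_compat_l, cexp_sub1_bound; auto |].
  rewrite Cmod_scaled_shift.
  assert (0 <= 4 * (L * Cmod h)) by nra.
  assert (Cmod (w s0) * exp (L * Cmod h) <= A)
    by (eapply Rle_trans; [apply Rmult_le_compat_l | apply Hw0]; auto).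
  nra.
Qed.

Lemma w_center_cexp_taylor_le h : Cmod h <= r ->
  Cmod (w s0) * Cmod (cexp (- h * RtoC L) - 1 - (- h * RtoC L))%C <= 8 * L ^ 2 * A * Cmod h ^ 2.
Proof.
  intros Hh. pose proof (Cmod_ge_0 h). pose proof (Cmod_ge_0 (w s0)).
  pose proof (exp_scaled_shift_le h Hh).
  eapply Rle_trans; [apply Rmult_le_compat_l, cexp_taylor2_bound; auto |].
  rewrite Cmod_scaled_shift.
  assert (0 <= 8 * (L * Cmod h) ^ 2) by nra.
  assert (Cmod (w s0) * exp (L * Cmod h) <= A)
    by (eapply Rle_trans; [apply Rmult_le_compat_l | apply Hw0]; auto).
  nra.
Qed.

Lemma w_center_Cmod_le : Cmod (w s0) <= A.
Proof.
  pose proof (exp_ineq1_le (L * r)). pose proof (Cmod_ge_0 (w s0)).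
  assert (1 <= exp (L * r)) by nra. nra.
Qed.

Lemma w_Cmod_le h : Cmod h <= r -> Cmod (w (s0 + h)%C) <= A.
Proof.
  intros Hh. rewrite (Hw h Hh), Cmod_mult, Cmod_cexp.
  eapply Rle_trans; [| apply Hw0]. apply Rmult_le_compat_l; [apply Cmod_ge_0 |].
  apply exp_le_exp.
  replace (Re (- h * RtoC L)%C) with (- Re h * L) by (destruct h; simpl; ring).
  pose proof (re_le_Cmod h). pose proof (Rle_abs (- Re h)). rewrite Rabs_Ropp in *. nra.
Qed.

Lemma one_sub_w_center_Cmod_ge : m <= Cmod (1 - w s0)%C.
Proof. pose proof (Hmw 0%C) as H. rewrite Cplus_0_r, Cmod_0 in H. apply H; lra. Qed.

Lemma inv_factor_dev_le h : Cmod h <= r -> Cmod (f (s0 + h)%C - 1)%C <= A / m.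
Proof.
  intros Hh. assert (Hn := neq_0_of_Cmod_ge _ _ Hm (Hmw h Hh)).
  replace (f (s0 + h)%C - 1)%C with (w (s0 + h)%C / (1 - w (s0 + h)%C))%C by (field; auto).
  rewrite Cmod_div by auto. apply Rdiv_le_Rdiv.
  - split; [apply Cmod_ge_0 | apply w_Cmod_le; auto].
  - split; auto.
Qed.

Lemma inv_factor_Cmod_ge h : Cmod h <= r -> 1 <= Cmod (f (s0 + h)%C) * (1 + A).
Proof.
  intros Hh. assert (Hn := neq_0_of_Cmod_ge _ _ Hm (Hmw h Hh)).
  rewrite Cmod_inv by auto.
  pose proof (Cmod_triangle 1 (- w (s0 + h)%C))%C as Htri. rewrite Cmod_opp, Cmod_1 in Htri.
  pose proof (w_Cmod_le h Hh). pose proof (Hmw h Hh).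
  apply Rmult_le_reg_l with (Cmod (1 - w (s0 + h)%C)%C); [lra |].
  rewrite <- Rmult_assoc, Rinv_r by lra. change (1 - w (s0 + h)%C)%C with (1 + - w (s0 + h)%C)%C.
  lra.
Qed.

Lemma inv_factor_lip_le h : Cmod h <= r ->
  Cmod (f (s0 + h)%C - f s0)%C <= (4 * L * A / (m * m)) * Cmod h.
Proof.
  intros Hh. assert (Hn := neq_0_of_Cmod_ge _ _ Hm (Hmw h Hh)).
  assert (Hm0 := one_sub_w_center_Cmod_ge).
  assert (Hn0 := neq_0_of_Cmod_ge _ _ Hm Hm0).
  replace (f (s0 + h)%C - f s0)%C with
    (w s0 * (cexp (- h * RtoC L) - 1) / ((1 - w (s0 + h)%C) * (1 - w s0)))%C
    by (rewrite (Hw h Hh); field; rewrite <- (Hw h Hh); auto).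
  rewrite Cmod_div, Cmod_mult by (apply Cmult_neq_0; auto).
  pose proof (w_center_cexp_dev_le h Hh). pose proof (Hmw h Hh).
  replace (4 * L * A / (m * m) * Cmod h) with ((4 * L * A * Cmod h) / (m * m)) by (field; lra).
  apply Rdiv_le_Rdiv; split; try nra.
  - apply Rmult_le_pos; apply Cmod_ge_0.
  - rewrite Cmod_mult. apply Rmult_le_compat; lra.
Qed.

Lemma inv_factor_deriv_Cmod_le : Cmod df0 <= 4 * L * A / (m * m).
Proof.
  assert (Hm0 := one_sub_w_center_Cmod_ge).
  assert (Hn0 := neq_0_of_Cmod_ge _ _ Hm Hm0).
  rewrite Cmod_div by (apply Cmult_neq_0; auto).
  rewrite !Cmod_mult, Cmod_opp, Cmod_R, Rabs_right by lra.
  pose proof w_center_Cmod_le. pose proof (Cmod_ge_0 (w s0)).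
  apply Rdiv_le_Rdiv; split; try nra.
Qed.

Lemma inv_factor_taylor_le h : Cmod h <= r ->
  Cmod (f (s0 + h)%C - f s0 - h * df0)%C <= (20 * L ^ 2 * A / (m * (m * m))) * Cmod h ^ 2.
Proof.
  intros Hh. assert (Hn := neq_0_of_Cmod_ge _ _ Hm (Hmw h Hh)).
  assert (Hm0 := one_sub_w_center_Cmod_ge).
  assert (Hn0 := neq_0_of_Cmod_ge _ _ Hm Hm0).
  pose proof (w_center_cexp_dev_le h Hh) as B1. pose proof (w_center_cexp_taylor_le h Hh) as B2.
  pose proof (Hmw h Hh) as Hmh. pose proof w_center_Cmod_le as HW0.
  set (W := w (s0 + h)%C) in *. set (W0 := w s0) in *. set (E := cexp (- h * RtoC L)) in *.
  assert (HW : W = (W0 * E)%C) by (apply Hw; auto).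
  replace (/ (1 - W) - / (1 - W0) - h * (- RtoC L * W0 / ((1 - W0) * (1 - W0))))%C with
    ((W0 * (E - 1 - (- h * RtoC L)) * (1 - W0) + h * (- RtoC L * W0) * (W0 * (E - 1)))
      / ((1 - W) * ((1 - W0) * (1 - W0))))%C.
  2: { field_simplify_eq; auto. rewrite HW. ring. }
  rewrite Cmod_div by (repeat apply Cmult_neq_0; auto).
  pose proof (Cmod_ge_0 h). pose proof (Cmod_ge_0 W0).
  pose proof (Cmod_ge_0 (E - 1)%C). pose proof (Cmod_ge_0 (E - 1 - (- h * RtoC L))%C).
  assert (H1W0 : Cmod (1 - W0)%C <= 2).
  { pose proof (Cmod_triangle 1 (- W0))%C as Htri. rewrite Cmod_opp, Cmod_1 in Htri.
    change (1 - W0)%C with (1 + - W0)%C. lra. }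
  assert (N1 : Cmod (W0 * (E - 1 - (- h * RtoC L)) * (1 - W0))%C <= 16 * L ^ 2 * A * Cmod h ^ 2).
  { rewrite !Cmod_mult. apply Rle_trans with (8 * L ^ 2 * A * Cmod h ^ 2 * 2); [| lra].
    apply Rmult_le_compat; auto; [apply Rmult_le_pos | apply Cmod_ge_0]; auto. }
  assert (N2 : Cmod (h * (- RtoC L * W0) * (W0 * (E - 1)))%C <= 4 * L ^ 2 * A * Cmod h ^ 2).
  { rewrite !Cmod_mult, Cmod_opp, Cmod_R, Rabs_right by lra.
    assert (L * Cmod W0 <= L) by nra.
    assert (Cmod h * (L * Cmod W0) <= Cmod h * L) by (apply Rmult_le_compat_l; auto).
    assert (Cmod h * (L * Cmod W0) * (Cmod W0 * Cmod (E - 1)%C)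
              <= (Cmod h * L) * (4 * L * A * Cmod h)) by (apply Rmult_le_compat; nra).
    nra. }
  replace (20 * L ^ 2 * A / (m * (m * m)) * Cmod h ^ 2)
    with ((20 * L ^ 2 * A * Cmod h ^ 2) / (m * (m * m))) by (field; lra).
  rewrite !Cmod_mult.
  apply Rdiv_le_Rdiv; split.
  - apply Cmod_ge_0.
  - eapply Rle_trans; [apply Cmod_triangle | lra].
  - apply Rmult_lt_0_compat; [lra | apply Rmult_lt_0_compat; lra].
  - apply Rmult_le_compat; [lra | nra | auto | apply Rmult_le_compat; lra].
Qed.
End InverseFactor.

Lemma psum_le_Series u : (forall n, 0 <= u n) -> ex_series u -> forall N, psum u N <= Series u.
Proof.
  intros Hu Hex N.
  apply Rle_trans with (psum u (S N)); [simpl; specialize (Hu N); lra |].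
  rewrite <- sum_n_psum.
  apply (is_lim_seq_incr_compare (sum_n u) (Series u) (Series_correct u Hex)).
  intros n. rewrite sum_Sn. specialize (Hu (S n)). unfold plus; simpl. lra.
Qed.

Lemma inv_pow_le_telescope p x : 1 < p -> 1 <= x ->
  exp (- p * ln (x + 1)) <= (exp ((1 - p) * ln x) - exp ((1 - p) * ln (x + 1))) / (p - 1).
Proof.
  intros Hp Hx.
  set (g := fun y => exp ((1 - p) * ln y)).
  destruct (MVT_gen g x (x + 1) (fun y => (1 - p) / y * exp ((1 - p) * ln y))) as [c [Hc Heq]].
  - intros y Hy. rewrite Rmin_left, Rmax_right in Hy by lra.
    unfold g. auto_derive; [lra | field; lra].
  - intros y Hy. rewrite Rmin_left, Rmax_right in Hy by lra.
    apply continuity_pt_filterlim, (ex_derive_continuous g). unfold g. auto_derive. lra.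
  - rewrite Rmin_left, Rmax_right in Hc by lra. unfold g in Heq.
    replace (x + 1 - x) with 1 in Heq by ring.
    assert (E1 : (1 - p) / c * exp ((1 - p) * ln c) = (1 - p) * exp (- p * ln c)).
    { replace ((1 - p) * ln c) with (- p * ln c + ln c) by ring.
      rewrite exp_plus, exp_ln by lra. field. lra. }
    assert (E2 : exp (- p * ln (x + 1)) <= exp (- p * ln c)).
    { apply exp_le_exp. assert (ln c <= ln (x + 1)) by (apply ln_le; lra). nra. }
    rewrite E1 in Heq.
    apply Rmult_le_reg_l with (p - 1); [lra |].
    replace ((p - 1) * ((exp ((1 - p) * ln x) - exp ((1 - p) * ln (x + 1))) / (p - 1)))
      with (exp ((1 - p) * ln x) - exp ((1 - p) * ln (x + 1))) by (field; lra).
    nra.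
Qed.

Lemma summable_inv_pow p : 1 < p -> summable (fun n => exp (- p * ln (INR n + 1))).
Proof.
  intros Hp. split; [intros; left; apply exp_pos |].
  set (u := fun n => exp (- p * ln (INR n + 1))).
  set (T := fun x => exp ((1 - p) * ln x) / (p - 1)).
  assert (HT : forall x, 0 <= T x) by (intros; apply Rdiv_le_0_compat; [left; apply exp_pos | lra]).
  exists (1 + 1 / (p - 1)).
  assert (H : forall N, psum u (S N) + T (INR N + 1) <= 1 + 1 / (p - 1)).
  { induction N as [|N IH].
    - unfold u, T; simpl. rewrite !Rplus_0_l, ln_1, !Rmult_0_r, exp_0. lra.
    - change (psum u (S N) + u (S N) + T (INR (S N) + 1) <= 1 + 1 / (p - 1)).
      replace (u (S N)) with (exp (- p * ln (INR N + 1 + 1))) by (unfold u; rewrite S_INR; auto).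
      rewrite S_INR.
      pose proof (inv_pow_le_telescope p (INR N + 1) Hp ltac:(pose proof (pos_INR N); lra)).
      unfold T, Rdiv in *. lra. }
  intros [|N]; [simpl; assert (0 < 1 / (p - 1)) by (apply Rdiv_lt_0_compat; lra); lra |].
  specialize (H N). specialize (HT (INR N + 1)). lra.
Qed.

(* [1 + L <= e^(kappa L) / kappa] trades the logarithmic factor for a sliver of the exponent. *)
Lemma log_sq_exp_le kappa L sigma : 0 < kappa <= 1 -> 0 <= L ->
  (1 + L) ^ 2 * exp (- L * sigma) <= exp (- (sigma - 2 * kappa) * L) / kappa ^ 2.
Proof.
  intros Hk HL.
  assert (H1 : 1 + L <= exp (kappa * L) / kappa).
  { pose proof (exp_ineq1_le (kappa * L)). apply Rmult_le_reg_r with kappa; [lra |].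
    unfold Rdiv. rewrite Rmult_assoc, Rinv_l by lra. nra. }
  replace (exp (- (sigma - 2 * kappa) * L) / kappa ^ 2)
    with ((exp (kappa * L) / kappa) ^ 2 * exp (- L * sigma)).
  - apply Rmult_le_compat_r; [left; apply exp_pos | apply pow_incr; lra].
  - replace (- (sigma - 2 * kappa) * L) with (kappa * L + kappa * L + - L * sigma) by ring.
    rewrite !exp_plus. field. lra.
Qed.

Section Majorant.
Variables (lambda Cst delta : R) (l : nat -> R) (a : nat -> nat).
Hypothesis Hlambda : 0 < lambda.
Hypothesis Hl : forall n, -1 <= l n <= 1.
Hypothesis Ha0 : (0 < a O)%nat.
Hypothesis Hainc : forall n, (a n < a (S n))%nat.
Hypothesis HCst : 0 < Cst.
Hypothesis Hdelta : 0 < delta.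
Hypothesis Hmaj : forall t, 0 < t < delta ->
  ex_series (fun n => exp (- (l n * INR (a n) * t))) /\
  Series (fun n => exp (- (l n * INR (a n) * t))) <= Cst * Rpower t (- lambda).

Lemma seq_ge_S n : (S n <= a n)%nat.
Proof. induction n; [lia | specialize (Hainc n); lia]. Qed.

Lemma seq_le_seq m n : (m <= n)%nat -> (a m <= a n)%nat.
Proof. intros H; induction H; [lia | specialize (Hainc m0); lia]. Qed.

Lemma seq_INR_ge1 n : 1 <= INR (a n).
Proof. apply (le_INR 1). pose proof (seq_ge_S n). lia. Qed.

(* Evaluate the majorant at t = 1 / a_n: the first n + 1 terms are all at least e^-1. *)
Lemma index_le_majorant n : / delta < INR (a n) ->
  INR (S n) * exp (-1) <= Cst * exp (lambda * ln (INR (a n))).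
Proof.
  intros Hn.
  pose proof (seq_INR_ge1 n) as Han.
  set (t := / INR (a n)).
  assert (Ht : 0 < t < delta).
  { split; unfold t; [apply Rinv_0_lt_compat; lra |].
    rewrite <- (Rinv_inv delta). apply Rinv_lt_contravar; auto.
    apply Rmult_lt_0_compat; [apply Rinv_0_lt_compat |]; lra. }
  destruct (Hmaj t Ht) as [Hex Hle].
  set (u := fun k => exp (- (l k * INR (a k) * t))) in *.
  assert (Hu : forall k, 0 <= u k) by (intros; left; apply exp_pos).
  replace (Rpower t (- lambda)) with (exp (lambda * ln (INR (a n)))) in Hle
    by (unfold Rpower, t; rewrite ln_Rinv by lra; f_equal; ring).
  assert (Hk : forall k, (k <= n)%nat -> exp (-1) <= u k).
  { intros k Hkn. unfold u. apply exp_le_exp.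
    pose proof (le_INR _ _ (seq_le_seq k n Hkn)). pose proof (seq_INR_ge1 k).
    assert (INR (a k) * t <= 1).
    { unfold t. apply Rmult_le_reg_r with (INR (a n)); [lra |].
      rewrite Rmult_assoc, Rinv_l by lra. lra. }
    assert (0 <= INR (a k) * t)
      by (apply Rmult_le_pos; unfold t in *; [lra | left; apply Rinv_0_lt_compat; lra]).
    specialize (Hl k). rewrite Rmult_assoc. nra. }
  assert (Hp : forall k, (k <= S n)%nat -> INR k * exp (-1) <= psum u k).
  { induction k; intros Hkn; [simpl; lra |].
    rewrite S_INR. simpl psum. specialize (IHk ltac:(lia)). specialize (Hk k ltac:(lia)). lra. }
  pose proof (Hp (S n) (le_n _)). pose proof (psum_le_Series u Hu Hex (S n)). lra.
Qed.

Lemma ln_index_le n : / delta < INR (a n) ->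
  ln (INR n + 1) - 1 <= ln Cst + lambda * ln (INR (a n)).
Proof.
  intros Hn. pose proof (index_le_majorant n Hn) as H. rewrite S_INR in H.
  assert (0 < INR n + 1) by (pose proof (pos_INR n); lra).
  apply ln_le in H; [| apply Rmult_lt_0_compat; [lra | apply exp_pos]].
  rewrite ln_mult, ln_exp, ln_mult, ln_exp in H by (try lra; apply exp_pos). lra.
Qed.

Lemma seq_eventually_gt_inv : exists N0, forall n, (N0 <= n)%nat -> / delta < INR (a n).
Proof.
  destruct (archimed_cor1 delta Hdelta) as [N0 [HN0 HN0pos]].
  exists N0. intros n Hn.
  pose proof (le_INR _ _ (seq_ge_S n)) as Han. rewrite S_INR in Han.
  pose proof (le_INR _ _ Hn). pose proof (lt_0_INR _ HN0pos).
  assert (/ delta < INR N0).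
  { rewrite <- (Rinv_inv (INR N0)). apply Rinv_lt_contravar; auto.
    apply Rmult_lt_0_compat; try apply Rinv_0_lt_compat; auto. }
  lra.
Qed.

Lemma summable_log_sq_weights sigma : lambda < sigma ->
  summable (fun n => (1 + ln (INR (a n))) ^ 2 * exp (- ln (INR (a n)) * sigma)).
Proof.
  intros Hs.
  set (kappa := Rmin ((sigma - lambda) / 4) 1).
  assert (Hk : 0 < kappa <= 1) by (split; [apply Rmin_pos | apply Rmin_r]; lra).
  assert (Hk4 : kappa <= (sigma - lambda) / 4) by apply Rmin_l.
  set (p := (sigma - 2 * kappa) / lambda).
  assert (Hp : 1 < p).
  { unfold p. apply Rmult_lt_reg_r with lambda; auto. unfold Rdiv.
    rewrite Rmult_assoc, Rinv_l by lra. lra. }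
  set (K := exp (p * (1 + ln Cst)) / kappa ^ 2).
  destruct seq_eventually_gt_inv as [N0 HN0].
  apply summable_le_eventually with (u := fun n => K * exp (- p * ln (INR n + 1))) (N0 := N0).
  - apply summable_scal; [| apply summable_inv_pow; auto].
    unfold K. left; apply Rdiv_lt_0_compat; [apply exp_pos | apply pow_lt; lra].
  - intros n. apply Rmult_le_pos; [apply pow2_ge_0 | left; apply exp_pos].
  - intros n Hn.
    assert (HL : 0 <= ln (INR (a n))) by (rewrite <- ln_1; apply ln_le; [lra | apply seq_INR_ge1]).
    pose proof (ln_index_le n (HN0 n Hn)) as Hln.
    eapply Rle_trans; [apply (log_sq_exp_le kappa); auto |].
    unfold K, Rdiv.
    rewrite (Rmult_comm (exp (p * (1 + ln Cst)))), Rmult_assoc, <- exp_plus, Rmult_comm.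
    apply Rmult_le_compat_l; [left; apply Rinv_0_lt_compat, pow_lt; lra |].
    apply exp_le_exp.
    assert (Hsig : sigma - 2 * kappa = p * lambda) by (unfold p; field; lra).
    rewrite Hsig. nra.
Qed.
End Majorant.

Definition euler_weight (l : R) (a : nat) (s : C) : C := (RtoC l * cpow_neg (INR a) s)%C.

Lemma Cmod_euler_weight l a s :
  Cmod (euler_weight l a s) = Rabs l * exp (- Re s * ln (INR a)).
Proof.
  unfold euler_weight, cpow_neg. rewrite Cmod_mult, Cmod_R, Cmod_cexp.
  destruct s; simpl; do 2 f_equal; ring.
Qed.

Lemma euler_weight_shift l a s0 h :
  euler_weight l a (s0 + h)%C = (euler_weight l a s0 * cexp (- h * RtoC (ln (INR a))))%C.
Proof.
  unfold euler_weight, cpow_neg. rewrite <- Cmult_assoc, <- cexp_add. do 2 f_equal. ring.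
Qed.

Lemma Re_add_ge (s0 h : C) r : Cmod h <= r -> Re s0 - r <= Re (s0 + h)%C.
Proof.
  intros H. pose proof (re_le_Cmod h). pose proof (Rle_abs (- Re h)). rewrite Rabs_Ropp in *.
  replace (Re (s0 + h)%C) with (Re s0 + Re h) by (destruct s0, h; reflexivity). lra.
Qed.

Lemma Cmod_euler_weight_le_pow l a s sigma : Rabs l <= 1 -> (1 <= a)%nat -> sigma <= Re s ->
  Cmod (euler_weight l a s) <= exp (- ln (INR a) * sigma).
Proof.
  intros Hl Ha Hs. rewrite Cmod_euler_weight.
  assert (0 <= ln (INR a)) by (rewrite <- ln_1; apply ln_le; [lra | apply (le_INR 1); auto]).
  assert (exp (- Re s * ln (INR a)) <= exp (- ln (INR a) * sigma)) by (apply exp_le_exp; nra).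
  pose proof (Rabs_pos l). pose proof (exp_pos (- Re s * ln (INR a))). nra.
Qed.

Lemma one_sub_euler_weight_Cmod_ge l a s sigma : Rabs l <= 1 -> (2 <= a)%nat ->
  0 <= sigma <= Re s -> 1 - exp (- ln 2 * sigma) <= Cmod (1 - euler_weight l a s)%C.
Proof.
  intros Hl Ha Hs.
  pose proof (Cmod_triangle (1 - euler_weight l a s) (euler_weight l a s))%C as Htri.
  assert (E : (1 - euler_weight l a s + euler_weight l a s)%C = 1%C) by ring.
  rewrite E, Cmod_1 in Htri.
  assert (Cmod (euler_weight l a s) <= exp (- ln 2 * sigma)).
  { apply Rle_trans with (exp (- ln (INR a) * sigma));
      [apply Cmod_euler_weight_le_pow; [auto | lia | lra] |].
    apply exp_le_exp. apply le_INR in Ha.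
    assert (0 < ln 2) by (rewrite <- ln_1; apply ln_increasing; lra).
    assert (ln 2 <= ln (INR a)) by (apply ln_le; simpl in Ha; lra).
    nra. }
  lra.
Qed.

(* Weights with a_n >= 2 have modulus at most 2^-sigma < 1; only a_0 = 1 needs [l_0 <> 1]. *)
Lemma euler_denominator_bounded_below (l : nat -> R) (a : nat -> nat) sigma :
  (forall n, -1 <= l n <= 1) -> (0 < a O)%nat -> (forall n, (a n < a (S n))%nat) ->
  ~ (a O = 1%nat /\ l O = 1) -> 0 < sigma ->
  exists m, 0 < m /\
    forall n s, sigma <= Re s -> m <= Cmod (1 - euler_weight (l n) (a n) s)%C.
Proof.
  intros Hl Ha0 Hainc Hnd Hs.
  set (q := 1 - exp (- ln 2 * sigma)).
  assert (Hq : 0 < q).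
  { assert (0 < ln 2) by (rewrite <- ln_1; apply ln_increasing; lra).
    assert (exp (- ln 2 * sigma) < exp 0) by (apply exp_increasing; nra).
    unfold q. rewrite exp_0 in *. lra. }
  assert (Hge : forall n s, (2 <= a n)%nat -> sigma <= Re s ->
            q <= Cmod (1 - euler_weight (l n) (a n) s)%C)
    by (intros; apply one_sub_euler_weight_Cmod_ge; [apply Rabs_le, Hl | auto | lra]).
  assert (Ha_ge : forall k, (a O + k <= a k)%nat)
    by (induction k; [lia | specialize (Hainc k); lia]).
  destruct (Nat.eq_dec (a O) 1) as [Ha1|Ha1].
  - assert (Hl0 : l O < 1) by (destruct (Hl O); destruct (Req_dec (l O) 1); [tauto | lra]).
    exists (Rmin q (1 - l O)). split; [apply Rmin_pos; lra |].
    intros [|n] s Hre.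
    + rewrite Ha1. unfold euler_weight, cpow_neg. simpl INR. rewrite ln_1.
      assert (E0 : (- s * RtoC 0)%C = 0%C) by (apply injective_projections; simpl; ring).
      assert (E1 : (1 - RtoC (l O))%C = RtoC (1 - l O))
        by (apply injective_projections; simpl; ring).
      rewrite E0, cexp_0, Cmult_1_r, E1, Cmod_R, Rabs_right by lra. apply Rmin_r.
    + eapply Rle_trans; [apply Rmin_l | apply Hge; auto].
      specialize (Ha_ge (S n)). lia.
  - exists q. split; auto. intros n s Hre. apply Hge; auto.
    specialize (Ha_ge n). lia.
Qed.

Definition euler_product (l : nat -> R) (a : nat -> nat) (s : C) : C :=
  limC (cprod (fun n => euler_factor (l n) (a n) s)).

Section EulerProduct.
Variables (lambda Cst delta : R) (l : nat -> R) (a : nat -> nat).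
Hypothesis Hlambda : 0 < lambda.
Hypothesis Hl : forall n, -1 <= l n <= 1.
Hypothesis Ha0 : (0 < a O)%nat.
Hypothesis Hainc : forall n, (a n < a (S n))%nat.
Hypothesis HCst : 0 < Cst.
Hypothesis Hdelta : 0 < delta.
Hypothesis Hmaj : forall t, 0 < t < delta ->
  ex_series (fun n => exp (- (l n * INR (a n) * t))) /\
  Series (fun n => exp (- (l n * INR (a n) * t))) <= Cst * Rpower t (- lambda).

Section Near.
Variables (s0 : C) (r m : R).
Hypothesis Hr : 0 < r.
Hypothesis Hsigma : lambda < Re s0 - r.
Hypothesis Hm : 0 < m.
Hypothesis Hmw : forall n s, Re s0 - r <= Re s ->
  m <= Cmod (1 - euler_weight (l n) (a n) s)%C.

Local Notation L n := (ln (INR (a n))).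
Local Notation A n := (exp (- L n * (Re s0 - r))).
Local Notation w n := (euler_weight (l n) (a n)).
Local Notation P s := (cprod (fun n => euler_factor (l n) (a n) s)).

Lemma ln_seq_ge0 n : 0 <= L n.
Proof. rewrite <- ln_1. apply ln_le; [lra | apply (seq_INR_ge1 a Ha0 Hainc)]. Qed.

Lemma weight_center_le n : Cmod (w n s0) * exp (L n * r) <= A n.
Proof.
  rewrite Cmod_euler_weight, Rmult_assoc, <- exp_plus.
  replace (- Re s0 * L n + L n * r) with (- L n * (Re s0 - r)) by ring.
  assert (Rabs (l n) <= 1) by apply Rabs_le, Hl.
  pose proof (Rabs_pos (l n)). pose proof (exp_pos (- L n * (Re s0 - r))). nra.
Qed.

Lemma weight_exponent_le1 n : A n <= 1.
Proof.
  rewrite <- exp_0. apply exp_le_exp. pose proof (ln_seq_ge0 n). nra.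
Qed.

Lemma denominator_near_ge n h : Cmod h <= r -> m <= Cmod (1 - w n (s0 + h)%C)%C.
Proof. intros Hh. apply Hmw, Re_add_ge, Hh. Qed.

Lemma summable_weight_multiples c k : 0 <= c -> (k <= 2)%nat ->
  summable (fun n => c * L n ^ k * A n).
Proof.
  intros Hc Hk.
  apply summable_le_scal with (fun n => (1 + L n) ^ 2 * A n) c; auto.
  - apply (summable_log_sq_weights lambda Cst delta l a); auto.
  - intros n. pose proof (ln_seq_ge0 n) as HL. pose proof (exp_pos (- L n * (Re s0 - r))).
    assert (HLk : 0 <= L n ^ k <= (1 + L n) ^ 2)
      by (destruct k as [|[|[|k]]]; simpl; [nra | nra | nra | lia]).
    split; [apply Rmult_le_pos; [apply Rmult_le_pos |] |]; try lra.
    rewrite Rmult_assoc. apply Rmult_le_compat_l; auto. apply Rmult_le_compat_r; lra.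
Qed.

Lemma weight_near_shift n h : Cmod h <= r ->
  w n (s0 + h)%C = (w n s0 * cexp (- h * RtoC (L n)))%C.
Proof. intros _. apply euler_weight_shift. Qed.

Local Hint Resolve ln_seq_ge0 weight_center_le weight_exponent_le1 denominator_near_ge
  weight_near_shift : euler.

Lemma factor_near_dev n h : Cmod h <= r ->
  Cmod (euler_factor (l n) (a n) (s0 + h) - 1)%C <= A n / m.
Proof. apply (inv_factor_dev_le (w n) s0 r (L n) (A n) m); auto with euler. Qed.

Lemma factor_near_lip n h : Cmod h <= r ->
  Cmod (euler_factor (l n) (a n) (s0 + h) - euler_factor (l n) (a n) s0)%C
    <= (4 * L n * A n / (m * m)) * Cmod h.
Proof. apply (inv_factor_lip_le (w n) s0 r (L n) (A n) m); auto with euler; lra. Qed.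

Lemma factor_near_taylor n h : Cmod h <= r ->
  Cmod (euler_factor (l n) (a n) (s0 + h) - euler_factor (l n) (a n) s0
        - h * ((- RtoC (L n) * w n s0) / ((1 - w n s0) * (1 - w n s0))))%C
    <= (20 * L n ^ 2 * A n / (m * (m * m))) * Cmod h ^ 2.
Proof. apply (inv_factor_taylor_le (w n) s0 r (L n) (A n) m); auto with euler; lra. Qed.

Lemma factor_deriv_le n :
  Cmod ((- RtoC (L n) * w n s0) / ((1 - w n s0) * (1 - w n s0)))%C <= 4 * L n * A n / (m * m).
Proof. apply (inv_factor_deriv_Cmod_le (w n) s0 r); auto with euler; lra. Qed.

Lemma factor_center_Cmod_ge n : 1 <= Cmod (euler_factor (l n) (a n) s0) * (1 + A n).
Proof.
  pose proof (inv_factor_Cmod_ge (w n) s0 r (L n) (A n) m) as H.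
  rewrite <- (Cplus_0_r s0) at 1. apply H; auto with euler. rewrite Cmod_0; lra.
Qed.

Lemma summable_dev_bound : summable (fun n => A n / m).
Proof.
  apply summable_ext with (fun n => / m * L n ^ 0 * A n).
  - intros n. simpl. field. lra.
  - apply summable_weight_multiples; [left; apply Rinv_0_lt_compat |]; auto.
Qed.

Lemma summable_lip_bound : summable (fun n => 4 * L n * A n / (m * m)).
Proof.
  apply summable_ext with (fun n => 4 / (m * m) * L n ^ 1 * A n).
  - intros n. simpl. field. lra.
  - apply summable_weight_multiples; [apply Rdiv_le_0_compat; nra | auto].
Qed.

Lemma summable_taylor_bound : summable (fun n => 20 * L n ^ 2 * A n / (m * (m * m))).
Proof.
  apply summable_ext with (fun n => 20 / (m * (m * m)) * L n ^ 2 * A n).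
  - intros n. field. lra.
  - apply summable_weight_multiples; auto.
    apply Rdiv_le_0_compat; [lra | repeat apply Rmult_lt_0_compat; lra].
Qed.

Lemma euler_partial_products_tend h : Cmod h <= r ->
  tends (P (s0 + h)%C) (euler_product l a (s0 + h)%C).
Proof.
  intros Hh. apply tends_limC, (cprod_tends _ _ summable_dev_bound).
  intros n. apply factor_near_dev, Hh.
Qed.

Lemma euler_product_ex_derive :
  ex_derive (K := C_AbsRing) (V := C_NormedModule) (euler_product l a) s0.
Proof.
  apply (ex_derive_of_cprod_tends (fun n => euler_factor (l n) (a n)) s0 r
    (fun n => (- RtoC (L n) * w n s0) / ((1 - w n s0) * (1 - w n s0)))%C
    _ _ _ Hr summable_dev_bound summable_lip_bound summable_taylor_bound).
  - apply factor_near_dev.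
  - apply factor_near_lip.
  - apply factor_near_taylor.
  - apply factor_deriv_le.
  - apply euler_partial_products_tend.
Qed.

Lemma euler_product_neq0 : euler_product l a s0 <> 0%C.
Proof.
  assert (HP : tends (P s0) (euler_product l a s0)).
  { pose proof (euler_partial_products_tend 0%C) as H. rewrite Cplus_0_r in H.
    apply H. rewrite Cmod_0. lra. }
  assert (HA : summable (fun n => A n)).
  { apply summable_ext with (fun n => 1 * L n ^ 0 * A n); [intros; simpl; ring |].
    apply summable_weight_multiples; auto; lra. }
  destruct HA as [HA0 [M HM]].
  assert (Hlow : forall N, exp (- M) <= Cmod (P s0 N)).
  { intros N. eapply Rle_trans; [| apply (cprod_Cmod_ge_exp _ _ HA0 factor_center_Cmod_ge)].
    apply exp_le_exp. specialize (HM N). lra. }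
  pose proof (tends_Cmod_ge _ _ _ HP Hlow) as Hge.
  intros E. rewrite E, Cmod_0 in Hge. pose proof (exp_pos (- M)). lra.
Qed.
End Near.

Hypothesis Hnondeg : ~ (a O = 1%nat /\ l O = 1).

Lemma euler_product_local s0 : lambda < Re s0 ->
  ex_derive (K := C_AbsRing) (V := C_NormedModule) (euler_product l a) s0 /\
  euler_product l a s0 <> 0%C /\
  tends (cprod (fun n => euler_factor (l n) (a n) s0)) (euler_product l a s0).
Proof.
  intros Hs0.
  set (r := (Re s0 - lambda) / 2).
  assert (Hr : 0 < r) by (unfold r; lra).
  assert (Hsigma : lambda < Re s0 - r) by (unfold r; lra).
  destruct (euler_denominator_bounded_below l a (Re s0 - r) Hl Ha0 Hainc Hnondeg ltac:(lra))
    as [m [Hm Hmw]].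
  split; [| split].
  - apply (euler_product_ex_derive s0 r m); auto.
  - apply (euler_product_neq0 s0 r m); auto.
  - rewrite <- (Cplus_0_r s0). apply (euler_partial_products_tend s0 r m); auto.
    rewrite Cmod_0. lra.
Qed.
End EulerProduct.

(* Indexing: l n, a n (n : nat, from 0) stand for l_{n+1}, a_{n+1}. *)
Theorem mainTheorem3
  (lambda : R) (l : nat -> R) (a : nat -> nat)
  (Hlambda : 0 < lambda)
  (Hl : forall n, -1 <= l n <= 1)
  (Ha0 : (0 < a O)%nat)
  (Hainc : forall n, (a n < a (S n))%nat)
  (Hnondeg : ~ (a O = 1%nat /\ l O = 1))
  (Hmaj : exists Cst, 0 < Cst /\ exists delta, 0 < delta /\
     forall t, 0 < t < delta ->
       ex_series (fun n => exp (- (l n * INR (a n) * t))) /\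
       Series (fun n => exp (- (l n * INR (a n) * t))) <= Cst * Rpower t (- lambda)) :
  exists F : C -> C,
    holomorphic_on (fun s => Rmax (1/2) lambda < Re s) F /\
    (forall s, Rmax (1/2) lambda < Re s -> F s <> 0%C) /\
    (forall s, Rmax (1/2) lambda < Re s -> 1 < Re s ->
       filterlim (fun N => cprod (fun n => euler_factor (l n) (a n) s) N)
                 eventually (locally (F s))).
Proof.
  destruct Hmaj as [Cst [HCst [delta [Hdelta Hmaj']]]].
  pose proof (euler_product_local lambda Cst delta l a Hlambda Hl Ha0 Hainc HCst Hdelta Hmaj'
                Hnondeg) as Hlocal.
  pose proof (Rmax_r (1/2) lambda).
  exists (euler_product l a). split; [| split].
  - intros s Hs. apply Hlocal. lra.
  - intros s Hs. apply Hlocal. lra.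
  - intros s Hs _. apply tends_filterlim, Hlocal. lra.
Qed.
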